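(* Let $\mathcal A$ be a weighted ODCA over $\mathbb F$, $K=|Q|\cdot|C|$, $c$ a configuration, $V\subseteq\mathbb F^{|Q|}$ a subspace, $S\subseteq C$ and $X\subseteq\mathbb N$. If $z$ is a minimal witness for $(c,\overline V,S,X)$ and exactly $t$ distinct counter values occur in the run of $z$ from $c$, then $|z|\le t\cdot K$.
   Context: Fix a field $\mathbb{F}$ and a finite alphabet $\Sigma$. For $n\in\mathbb N$ let $\mathrm{sgn}(n)=0$ if $n=0$ and $1$ if $n>0$. A weighted ODCA is $\mathcal{A}=((C,\delta_0,\delta_1,p_0),(Q,\lambda,\Delta,\eta))$ where $C$ is a finite nonempty set of counter states, $\delta_0:C\times\Sigma\to C\times\{0,+1\}$ and $\delta_1:C\times\Sigma\to C\times\{-1,0,+1\}$ are deterministic counter transition functions, $p_0\in C$, $Q$ is a finite nonempty set of states, $\lambda,\eta\in\mathbb{F}^{|Q|}$, and $\Delta:\Sigma\times\{0,1\}\to\mathbb{F}^{|Q|\times|Q|}$. A configuration is a triple $(x,p,n)\in\mathbb{F}^{|Q|}\times C\times\mathbb{N}$ (weight vector, counter state, counter value). Reading $a\in\Sigma$ from $(x,p,n)$ with $d=\mathrm{sgn}(n)$ and $\delta_d(p,a)=(p',e)$ leads to $(x\Delta(a,d),p',n+e)$; for each word $w$ and configuration $c$ there is a unique run of $w$ from $c$. For a subspace $V\subseteq\mathbb F^{|Q|}$ let $\overline V=\mathbb F^{|Q|}\setminus V$. For $S\subseteq C$ and $X\subseteq\mathbb N$, a word $z$ is a witness for $(c,\overline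 V,S,X)$ if the run of $z$ from $c$ ends in a configuration $(x,p,n)$ with $x\in\overline V$, $p\in S$, $n\in X$; it is a minimal witness if no strictly shorter word is a witness. *)

From HB Require Import structures.
From mathcomp Require Import all_boot all_order all_algebra.
Set Implicit Arguments. Unset Strict Implicit. Unset Printing Implicit Defensive.
Import GRing.Theory.
Local Open Scope ring_scope.

Inductive move0 := M0zero | M0inc.
Inductive move1 := M1dec | M1zero | M1inc.

(* A weighted ODCA over the field F, alphabet Sigma, counter states C, states Q.
   Weight vectors live in F^{|Q|} = 'rV[F]_#|Q| (row vectors, x * Delta). *)
Record wodca (F : fieldType) (Sigma C Q : finType) := WODCA {
  delta0 : C -> Sigma -> C * move0;
  delta1 : C -> Sigma -> C * move1;
  p0 : C;
  lam : 'rV[F]_#|Q|;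
  Delta : Sigma -> bool -> 'M[F]_#|Q|;   (* Delta a d, with d = sgn n as bool *)
  eta : 'rV[F]_#|Q|
}.

Definition config (F : fieldType) (C Q : finType) := ('rV[F]_#|Q| * C * nat)%type.

Definition step (F : fieldType) (Sigma C Q : finType) (A : wodca F Sigma C Q)
  (c : config F C Q) (a : Sigma) : config F C Q :=
  let: (x, p, n) := c in
  if n == 0%N then
    let: (p', e) := delta0 A p a in
    (x *m Delta A a false, p', match e with M0zero => n | M0inc => n.+1 end)
  else
    let: (p', e) := delta1 A p a in
    (x *m Delta A a true, p', match e with M1dec => n.-1 | M1zero => n | M1inc => n.+1 end).

Fixpoint run (F : fieldType) (Sigma C Q : finType) (A : wodca F Sigma C Q)
  (c : config F C Q) (w : seq Sigma) : seq (config F C Q) :=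
  match w with
  | [::] => [:: c]
  | a :: w' => c :: run A (step A c a) w'
  end.

Definition final (F : fieldType) (Sigma C Q : finType) (A : wodca F Sigma C Q)
  (c : config F C Q) (w : seq Sigma) : config F C Q := foldl (step A) c w.

(* A subspace V of F^{|Q|} is given as the row space of a matrix V;
   x \in V  iff  (x <= V)%MS.  The complement \overline V is its negation. *)
Definition witness (F : fieldType) (Sigma C Q : finType) (A : wodca F Sigma C Q)
  (c : config F C Q) (V : 'M[F]_#|Q|) (S : {set C}) (X : nat -> Prop)
  (z : seq Sigma) : Prop :=
  let: (x, p, n) := final A c z in
  ~~ (x <= V)%MS /\ p \in S /\ X n.

Definition minimal_witness (F : fieldType) (Sigma C Q : finType) (A : wodca F Sigma C Q)
  (c : config F C Q) (V : 'M[F]_#|Q|) (S : {set C}) (X : nat -> Prop)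
  (z : seq Sigma) : Prop :=
  witness A c V S X z /\
  forall z' : seq Sigma, (size z' < size z)%N -> ~ witness A c V S X z'.

Definition num_counter_values (F : fieldType) (Sigma C Q : finType)
  (A : wodca F Sigma C Q) (c : config F C Q) (w : seq Sigma) : nat :=
  size (undup [seq cf.2 | cf <- run A c w]).

From mathcomp Require Import all_boot all_order all_algebra zify.

(* Write the run of z from c as the configurations (x_i, p_i, n_i), i = 0..|z|,
   reached after the prefixes of z, and call (p_i, n_i) the control of step i.
   Reading a word from a configuration with fixed control yields a fixed control
   and transforms the weight vector by a fixed matrix M (final_linear).  Hence
   if i < j have the same control, the spliced word z[0,i) z[j,|z|) ends in
   (x_i M, p', n') while z ends in (x_j M, p', n').  Minimality of z forces
   x_i M in V for all such earlier i, whereas x_j M is not in V; so x_j is not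
   in the span of the earlier x_i (fresh_weight).  A sequence of vectors each
   outside the span of its predecessors has at most |Q| members
   (count_fresh_le_rank), so every control occurs at most |Q| times.  Only
   |C| * t controls occur, so the |z| + 1 steps of the run number at most
   t * |Q| * |C| (size_le_undup_mul, size_undup_pairs). *)

Set Implicit Arguments.
Unset Strict Implicit.
Unset Printing Implicit Defensive.

Lemma count_fresh_le_rank (F : fieldType) (n : nat) (f : nat -> 'rV[F]_n)
    (P : pred nat) (m : nat) :
  (forall j, j < m -> P j -> ~~ (f j <= \sum_(i < j | P i) <<f i>>)%MS) ->
  count P (iota 0 m) <= \rank (\sum_(i < m | P i) <<f i>>)%MS.
Proof.
elim: m => [|m IHm] fresh; first by [].
have -> : iota 0 m.+1 = rcons (iota 0 m) m by rewrite -cats1 -addn1 iotaD.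
rewrite -cats1 count_cat /= addn0 big_mkcond big_ord_recr /= -big_mkcond.
have {}IHm := IHm (fun j lt_jm => fresh j (ltnW lt_jm)).
case: ifP => Pm; last by rewrite addn0 addsmx0.
rewrite addn1; apply: leq_ltn_trans IHm (rank_ltmx _).
rewrite ltmxE addsmxSl /= addsmx_sub submx_refl /= genmxE.
exact: fresh.
Qed.

Lemma size_le_undup_mul (T : eqType) (s : seq T) (q : nat) :
  (forall x, count_mem x s <= q) -> size s <= size (undup s) * q.
Proof.
move=> rare; rewrite -sum1_size -big_undup_iterop_count mulnC -sum1_size.
rewrite big_distrr /=; apply: leq_sum => x _.
rewrite Monoid.iteropE muln1 (_ : forall k, iter k (addn 1) 0 = k) //.
by elim=> //= k ->.
Qed.

Lemma size_undup_pairs (T1 : finType) (T2 : eqType) (s : seq (T1 * T2)) :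
  size (undup s) <= #|T1| * size (undup (map snd s)).
Proof.
rewrite cardE -(size_allpairs pair); apply: uniq_leq_size (undup_uniq s) _.
move=> [x1 x2]; rewrite mem_undup => s_x.
by rewrite allpairs_f ?mem_enum // mem_undup (map_f snd s_x).
Qed.

Definition control (F : fieldType) (C Q : finType) (cf : config F C Q) : C * nat :=
  (cf.1.2, cf.2).

Definition prefix_config (F : fieldType) (Sigma C Q : finType)
  (A : wodca F Sigma C Q) (c : config F C Q) (w : seq Sigma) (i : nat) :
  config F C Q := final A c (take i w).

Section Runs.
Variables (F : fieldType) (Sigma C Q : finType) (A : wodca F Sigma C Q).

Lemma final_cat (c : config F C Q) (u v : seq Sigma) :
  final A c (u ++ v) = final A (final A c u) v.
Proof. by rewrite /final foldl_cat. Qed.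

Lemma final_linear (w : seq Sigma) (p : C) (n : nat) :
  exists M p' n', forall x, final A (x, p, n) w = ((x *m M)%R, p', n').
Proof.
elim: w p n => [|a w IHw] p n.
  by exists 1%:M%R, p, n => x; rewrite mulmx1.
have [D [p1 [n1 stepD]]] :
    exists D p1 n1, forall x, step A (x, p, n) a = ((x *m D)%R, p1, n1).
  rewrite /step; case: eqP => _; [case: (delta0 A p a) | case: (delta1 A p a)];
  by move=> p' e; do 3 eexists.
have [M [p' [n' finalM]]] := IHw p1 n1.
exists (D *m M)%R, p', n' => x.
change (final A (step A (x, p, n) a) w = ((x *m (D *m M))%R, p', n')).
by rewrite stepD finalM mulmxA.
Qed.

Lemma run_prefixes (c : config F C Q) (w : seq Sigma) :
  run A c w = [seq prefix_config A c w i | i <- iota 0 (size w).+1].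
Proof.
elim: w c => [|a w IHw] c //=; rewrite IHw /= -(addn1 1) iotaDl -map_comp.
by congr (_ :: _ :: _); apply: eq_map => i.
Qed.

End Runs.

Section MinimalWitness.
Variables (F : fieldType) (Sigma C Q : finType) (A : wodca F Sigma C Q).
Variables (c : config F C Q) (V : 'M[F]_#|Q|) (S : {set C}) (X : nat -> Prop).
Variable z : seq Sigma.
Hypothesis z_min : minimal_witness A c V S X z.

Let prefix := prefix_config A c z.
Let weight i := (prefix i).1.1.

Lemma fresh_weight (k : C * nat) (j : nat) :
  j <= size z -> control (prefix j) = k ->
  ~~ (weight j <= \sum_(i < j | control (prefix i) == k) <<weight i>>)%MS.
Proof.
case: k => p n le_jz control_j; have [z_wit z_short] := z_min.
have [M [p' [n' finalM]]] := final_linear A (drop j z) p n.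
have splice i : control (prefix i) = (p, n) ->
    final A c (take i z ++ drop j z) = ((weight i *m M)%R, p', n').
  rewrite final_cat -/(prefix_config A c z i) -/(prefix i) /weight.
  by case: (prefix i) => [[x q] r] [-> ->].
have [outV [inS inX]] : ~~ ((weight j *m M)%R <= V)%MS /\ p' \in S /\ X n'.
  by move: z_wit; rewrite /witness -(cat_take_drop j z) splice.
have earlier_inV (i : 'I_j) :
    control (prefix i) == (p, n) -> ((weight i *m M)%R <= V)%MS.
  move/eqP=> control_i; apply/negPn/negP => out_i.
  apply: (z_short (take i z ++ drop j z)); last by rewrite /witness splice.
  have lt_ij := ltn_ord i.
  by rewrite size_cat size_takel ?size_drop; lia.
apply: contra outV => /(submxMr M); move/submx_trans; apply.
rewrite sumsmxMr; apply/sumsmx_subP => i /earlier_inV.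
by apply: submx_trans; rewrite submxMr // genmxE.
Qed.

Lemma control_multiplicity_le (k : C * nat) :
  count (fun i => control (prefix i) == k) (iota 0 (size z).+1) <= #|Q|.
Proof.
apply: leq_trans (count_fresh_le_rank _) (rank_leq_col _) => j lt_jz /eqP.
exact: fresh_weight.
Qed.
End MinimalWitness.

Theorem mainTheorem9 (F : fieldType) (Sigma C Q : finType)
  (A : wodca F Sigma C Q) (HQ : (0 < #|Q|)%N)
  (c : config F C Q) (V : 'M[F]_#|Q|) (S : {set C}) (X : nat -> Prop)
  (z : seq Sigma) (t : nat) :
  minimal_witness A c V S X z ->
  num_counter_values A c z = t ->
  (size z <= t * (#|Q| * #|C|))%N.
Proof.
move=> z_min <-; set m := size z.
pose controls := [seq control (prefix_config A c z i) | i <- iota 0 m.+1].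
have few_controls : size (undup controls) <= #|C| * num_counter_values A c z.
  rewrite /num_counter_values.
  have -> : [seq cf.2 | cf <- run A c z] = [seq k.2 | k <- controls].
    by rewrite run_prefixes -!map_comp.
  exact: size_undup_pairs.
have rare_controls k : count_mem k controls <= #|Q|.
  by rewrite count_map; apply: control_multiplicity_le z_min k.
have := size_le_undup_mul rare_controls; rewrite size_map size_iota.
move/leq_trans/(_ (leq_mul few_controls (leqnn #|Q|))); lia.
Qed.
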